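(* Let $P$ be a poset, $I$ a non-empty index set, and $\mathcal{U}_i$ a maximal join-specification for $P$ for each $i\in I$. Then $\bigcap_{i\in I}\mathcal{U}_i$ is also maximal.
   Context: A join-specification for $P$ is a set $\mathcal{U}\subseteq\wp(P)$ such that $\bigvee S$ exists in $P$ for every $S\in\mathcal{U}$ and $\{p\}\in\mathcal{U}$ for every $p\in P$. A $\mathcal{U}$-ideal is a down-closed $C\subseteq P$ with $\bigvee S\in C$ whenever $S\in\mathcal{U}$, $S\subseteq C$; $\Gamma_{\mathcal{U}}(S)$ is the smallest $\mathcal{U}$-ideal containing $S$. $\mathcal{U}^+=\{S\subseteq P:\bigvee S\text{ exists in }P\text{ and }\bigvee S\in\Gamma_{\mathcal{U}}(S)\}$, and $\mathcal{U}$ is maximal if $\mathcal{U}=\mathcal{U}^+$. *)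

From Stdlib Require Import Classical.

Set Implicit Arguments.

Record is_poset (P : Type) (le : P -> P -> Prop) : Prop := {
  po_refl : forall x, le x x;
  po_antisym : forall x y, le x y -> le y x -> x = y;
  po_trans : forall x y z, le x y -> le y z -> le x z
}.

Section JoinSpec.
Variables (P : Type) (le : P -> P -> Prop).

Definition is_join (S : P -> Prop) (x : P) : Prop :=
  (forall s, S s -> le s x) /\ (forall y, (forall s, S s -> le s y) -> le x y).

Definition join_exists (S : P -> Prop) : Prop := exists x, is_join S x.

Definition join_spec (U : (P -> Prop) -> Prop) : Prop :=
  (forall S, U S -> join_exists S) /\
  (forall p : P, U (fun q => q = p)).

Definition U_ideal (U : (P -> Prop) -> Prop) (C : P -> Prop) : Prop :=
  (forall x y, le x y -> C y -> C x) /\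
  (forall S x, U S -> (forall s, S s -> C s) -> is_join S x -> C x).

Definition Gamma (U : (P -> Prop) -> Prop) (S : P -> Prop) : P -> Prop :=
  fun x => forall C, U_ideal U C -> (forall s, S s -> C s) -> C x.

Definition Uplus (U : (P -> Prop) -> Prop) : (P -> Prop) -> Prop :=
  fun S => exists x, is_join S x /\ Gamma U S x.

Definition maximal_join_spec (U : (P -> Prop) -> Prop) : Prop :=
  join_spec U /\ (forall S, U S <-> Uplus U S).

End JoinSpec.

(* Every join-specification [U] satisfies [U ⊆ U^+], and [U ↦ U^+] is monotone,
   since enlarging [U] shrinks the family of [U]-ideals and so enlarges [Γ_U(S)].
   For [V = ⋂ U_i] this gives [V^+ ⊆ U_i^+ = U_i] for every [i], hence
   [V^+ ⊆ V ⊆ V^+]. *)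

Section JoinSpecClosure.
Context {P : Type} {le : P -> P -> Prop}.

Lemma Gamma_join {U : (P -> Prop) -> Prop} {S : P -> Prop} {x : P} :
  U S -> is_join le S x -> Gamma le U S x.
Proof.
  intros HS Hx C [_ Hjoin] HSC.
  exact (Hjoin S x HS HSC Hx).
Qed.

Lemma sub_Uplus {U : (P -> Prop) -> Prop} {S : P -> Prop} :
  join_spec le U -> U S -> Uplus le U S.
Proof.
  intros [Hjoins _] HS.
  destruct (Hjoins S HS) as [x Hx].
  exists x; split; [exact Hx | exact (Gamma_join HS Hx)].
Qed.

Lemma U_ideal_antimono {U V : (P -> Prop) -> Prop} {C : P -> Prop} :
  (forall S, U S -> V S) -> U_ideal le V C -> U_ideal le U C.
Proof.
  intros HUV [Hdown Hjoin]; split; [exact Hdown |].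
  intros S x HS; exact (Hjoin S x (HUV S HS)).
Qed.

Lemma Gamma_mono {U V : (P -> Prop) -> Prop} {S : P -> Prop} {x : P} :
  (forall T, U T -> V T) -> Gamma le U S x -> Gamma le V S x.
Proof.
  intros HUV Hx C HC; exact (Hx C (U_ideal_antimono HUV HC)).
Qed.

Lemma Uplus_mono {U V : (P -> Prop) -> Prop} {S : P -> Prop} :
  (forall T, U T -> V T) -> Uplus le U S -> Uplus le V S.
Proof.
  intros HUV [x [Hx HG]].
  exists x; split; [exact Hx | exact (Gamma_mono HUV HG)].
Qed.

Lemma join_spec_bigcap {I : Type} {U : I -> (P -> Prop) -> Prop} :
  (exists i : I, True) -> (forall i, join_spec le (U i)) ->
  join_spec le (fun S => forall i, U i S).
Proof.
  intros [i0 _] HU; split.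
  - intros S HS; exact (proj1 (HU i0) S (HS i0)).
  - intros p i; exact (proj2 (HU i) p).
Qed.

End JoinSpecClosure.

Theorem lemma2p24 (P : Type) (le : P -> P -> Prop) (I : Type)
  (U : I -> (P -> Prop) -> Prop) :
  is_poset le ->
  (exists i : I, True) ->
  (forall i, maximal_join_spec le (U i)) ->
  maximal_join_spec le (fun S => forall i, U i S).
Proof.
  intros _ HI HU.
  assert (Hspec : join_spec le (fun S => forall i, U i S)).
  { apply (join_spec_bigcap HI); intros i; exact (proj1 (HU i)). }
  split; [exact Hspec |].
  intros S; split.
  - exact (sub_Uplus Hspec).
  - intros HS i.
    apply (proj2 (HU i) S).
    apply (Uplus_mono (U := fun T => forall j, U j T)); [| exact HS].
    intros T HT; exact (HT i).
Qed.
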